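(* Let $E=(A\subset B)\in\mathcal S$ have Klein tableau $\Pi=[\gamma^0,\ldots,\gamma^e;\varphi^2,\ldots,\varphi^e]$ and let $k\le\ell\le e$ be natural numbers. Then the embeddings $E\!\downarrow_{\ell-k}|^k$ and $E|^\ell\!\downarrow_{\ell-k}$ coincide as objects of $\mathcal S$ (both equal $(p^{\ell-k}A/p^\ell A\subset B/p^\ell A)$), and their Klein tableau is $$[\gamma^{\ell-k},\gamma^{\ell-k+1},\ldots,\gamma^\ell;\varphi^{\ell-k+2},\ldots,\varphi^\ell]=\Pi|_k^\ell.$$ In particular, for $k=2$ the Klein tableau is $\Pi|_2^\ell=[\gamma^{\ell-2},\gamma^{\ell-1},\gamma^\ell;\varphi^\ell]$.
   Context: Let $R$ be a commutative principal ideal domain, $p$ a generator of a maximal ideal, $k_0=R/(p)$. A $p$-module is a finite-length $R$-module annihilated by some power of $p$. For a $p$-module $B$, $\mathrm{type}(B)$ is the partition $\beta$ with conjugate $\beta'_i=\dim_{k_0}p^{i-1}B/p^iB$. $\mathcal S$ is the category of embeddings $(A\subset B)$ of submodules in $p$-modules. For $E=(A\subset B)$: $E\!\downarrow_s=(p^sA\subset B)$ and $E|^\ell=(A/p^\ell A\subset B/p^\ell A)$. Partitions are drawn with the $i$-th column of length equal to the $i$-th part, rows numbered from the top. Klein tableau of $E=(A\subset B)$, $e$ the exponent of $A$: $\Pi(E)=[\gamma^0,\ldots,\gamma^e;\varphi^2,\ldots,\varphi^e]$ with $\gamma^i=\mathrm{type}(B/p^iA)$, and $\varphi^\ell$ the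 unique map from the boxes of the skew diagram $\gamma^\ell\setminus\gamma^{\ell-1}$ to positive integers, weakly increasing from left to right in each row, such that for $r\ge1$ the number of boxes in row $m$ with value $r$ equals $(\gamma^{\ell,r})'_m-(\gamma^{\ell,r-1})'_m$, where $\gamma^{\ell,r}=\mathrm{type}\big(B/(p^\ell A+p(p^{\ell-2}A\cap p^rB))\big)$. Restriction: for $u\le\ell\le e$, $\Pi|_u^\ell=[\gamma^{\ell-u},\ldots,\gamma^\ell;\varphi^{\ell-u+2},\ldots,\varphi^\ell]$, regarded as a Klein tableau whose stripe $\gamma^{\ell-u+j}\setminus\gamma^{\ell-u+j-1}$ is labelled $j$, subscripts retained. *)

From HB Require Import structures.
From mathcomp Require Import all_boot all_order all_algebra.
From Stdlib Require Import ClassicalEpsilon.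
Set Implicit Arguments. Unset Strict Implicit. Unset Printing Implicit Defensive.
Import GRing.Theory.
Local Open Scope ring_scope.

Section RingDefs.
Variable R : idomainType.

Definition dvdr (a x : R) : Prop := exists c, x = c * a.

Definition is_ideal (I : R -> Prop) : Prop :=
  I 0 /\ (forall x y, I x -> I y -> I (x + y)) /\ (forall a x, I x -> I (a * x)).

Definition is_principal (I : R -> Prop) : Prop :=
  exists a, forall x, I x <-> dvdr a x.

Definition is_pid : Prop := forall I, is_ideal I -> is_principal I.

Definition is_maximal_ideal (M : R -> Prop) : Prop :=
  is_ideal M /\ ~ M 1 /\
  forall J, is_ideal J -> (forall x, M x -> J x) -> (forall x, J x -> M x) \/ J 1.
End RingDefs.

Section ModDefs.
Variables (R : idomainType) (V : lmodType R).

Definition sset := V -> Prop.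
Definition szero : sset := fun x => x = 0.
Definition ssub (M N : sset) : Prop := forall x, M x -> N x.
Definition ssum (M N : sset) : sset := fun x => exists y z, M y /\ N z /\ x = y + z.
Definition scap (M N : sset) : sset := fun x => M x /\ N x.
Definition pmul (p : R) (s : nat) (M : sset) : sset :=
  fun x => exists y, M y /\ x = p ^+ s *: y.

Definition submod (M : sset) : Prop :=
  M 0 /\ (forall x y, M x -> M y -> M (x + y)) /\ (forall a x, M x -> M (a *: x)).

Definition finite_length (B : sset) : Prop :=
  exists (n : nat) (Ms : nat -> sset),
    (forall x, Ms 0%N x <-> x = 0) /\ (forall x, Ms n x <-> B x) /\
    (forall i, (i <= n)%N -> submod (Ms i)) /\
    (forall i, (i < n)%N ->
       ssub (Ms i) (Ms i.+1) /\ ~ ssub (Ms i.+1) (Ms i) /\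
       forall M, submod M -> ssub (Ms i) M -> ssub M (Ms i.+1) ->
         ssub M (Ms i) \/ ssub (Ms i.+1) M).

Definition p_module (p : R) (B : sset) : Prop :=
  submod B /\ finite_length B /\ exists n : nat, forall x, B x -> p ^+ n *: x = 0.

(** [kdim_is p P Q n]: the k0 = R/(p)-vector space P/Q (where pP <= Q <= P)
    has dimension n: there are x_1..x_n in P whose residues form a k0-basis. *)
Definition kdim_is (p : R) (P Q : sset) (n : nat) : Prop :=
  exists xs : n.-tuple V,
    (forall i, P (tnth xs i)) /\
    (forall y, P y -> exists c : n.-tuple R,
        Q (y - \sum_(i < n) tnth c i *: tnth xs i)) /\
    (forall c : n.-tuple R, Q (\sum_(i < n) tnth c i *: tnth xs i) ->
        forall i, dvdr p (tnth c i)).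

Definition kdim (p : R) (P Q : sset) : nat :=
  epsilon (inhabits 0%N) (kdim_is p P Q).

(** Conjugate of type(B/N): m |-> dim_k0 p^(m-1)(B/N) / p^m(B/N), for m >= 1
    (N a submodule of B; p^j(B/N) = (p^j B + N)/N). *)
Definition typec (p : R) (B N : sset) (m : nat) : nat :=
  kdim p (ssum (pmul p m.-1 B) N) (ssum (pmul p m B) N).

(** An object of S presented as a subquotient (A/N <= B/N) with N <= A <= B
    submodules of V; a genuine embedding (A <= B) is [embedding A B] (N = 0). *)
Record sq := SQ { sq_N : sset; sq_A : sset; sq_B : sset }.

Definition embedding (A B : sset) : sq := SQ szero A B.

Definition sq_eq (E F : sq) : Prop :=
  (forall x, sq_N E x <-> sq_N F x) /\ (forall x, sq_A E x <-> sq_A F x) /\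
  (forall x, sq_B E x <-> sq_B F x).

Definition sq_down (p : R) (s : nat) (E : sq) : sq :=
  SQ (sq_N E) (ssum (pmul p s (sq_A E)) (sq_N E)) (sq_B E).

Definition sq_restr (p : R) (l : nat) (E : sq) : sq :=
  SQ (ssum (pmul p l (sq_A E)) (sq_N E)) (sq_A E) (sq_B E).

Definition exponent_is (p : R) (E : sq) (e : nat) : Prop :=
  ssub (pmul p e (sq_A E)) (sq_N E) /\
  forall e', (e' < e)%N -> ~ ssub (pmul p e' (sq_A E)) (sq_N E).

(** (gamma^i)'_m = conjugate of type(B / p^i A) *)
Definition kgamma (p : R) (E : sq) (i m : nat) : nat :=
  typec p (sq_B E) (ssum (pmul p i (sq_A E)) (sq_N E)) m.

Definition kgamma_r (p : R) (E : sq) (l r m : nat) : nat :=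
  let A := sq_A E in let B := sq_B E in let N := sq_N E in
  typec p B
    (ssum (ssum (pmul p l A)
                (pmul p 1 (scap (ssum (pmul p (l - 2) A) N) (ssum (pmul p r B) N))))
          N) m.

End ModDefs.

(** A tableau is (e, gamma, phi): gamma i m = (gamma^i)'_m (rows m >= 1),
   phi l m c = value of phi^l on the box in row m, column c of the skew diagram
   gamma^l \ gamma^(l-1) (columns gamma^(l-1)'_m < c <= gamma^l'_m). *)
Record KT := MkKT { kt_e : nat; kt_gamma : nat -> nat -> nat;
                    kt_phi : nat -> nat -> nat -> nat }.

Definition is_klein_tableau (R : idomainType) (V : lmodType R) (p : R)
    (E : sq V) (T : KT) : Prop :=
  let e := kt_e T in let g := kt_gamma T in let phi := kt_phi T in
  exponent_is p E e /\
  (forall i m, (i <= e)%N -> (0 < m)%N -> g i m = kgamma p E i m) /\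
  (forall l, (2 <= l <= e)%N -> forall m, (0 < m)%N ->
     let box c := (g l.-1 m < c <= g l m)%N in
     (forall c, box c -> (1 <= phi l m c)%N) /\
     (forall c1 c2, box c1 -> box c2 -> (c1 <= c2)%N -> (phi l m c1 <= phi l m c2)%N) /\
     (forall r, (1 <= r)%N ->
        ((count (fun c => phi l m c == r) (iota (g l.-1 m).+1 (g l m - g l.-1 m)))%:Z
         = (kgamma_r p E l r m)%:Z - (kgamma_r p E l r.-1 m)%:Z)%R)).

(** restriction Pi|_u^l, stripes relabelled, values (subscripts) retained *)
Definition kt_restrict (T : KT) (u l : nat) : KT :=
  MkKT u (fun j => kt_gamma T (l - u + j)) (fun j => kt_phi T (l - u + j)).

(* All the objects involved are subquotients (p^(l-k) A / p^l A <= B / p^l A) of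
   the single chain of submodules p^i A of A, so both constructions produce the
   same object, and every submodule entering the definition of its Klein tableau
   (p^i (p^(l-k) A) + p^l A, and the denominators of the phi^j) coincides with
   the corresponding one for E at level l - k + i.  The only non-formal point is
   that a denominator B / (p^L A + p (p^(L-2) A cap (p^r B + p^l A))) does not
   change modulo p^l A, by the modular law, since p^l A <= p^(L-2) A.  For the
   exponent: if p^m A <= p^l A with m < l, the chain p^i A becomes stationary
   at m, so p^m A = p^e A = 0 and m is not below the exponent e of A. *)
From HB Require Import structures.
From mathcomp Require Import all_boot all_order all_algebra.
From mathcomp Require Import zify.
From Stdlib Require Import FunctionalExtensionality PropExtensionality.
Set Implicit Arguments. Unset Strict Implicit. Unset Printing Implicit Defensive.
Local Open Scope ring_scope.
Import GRing.Theory.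

Section SubmoduleCalculus.
Variables (R : idomainType) (p : R) (V : lmodType R).
Implicit Types (M N K X Y Z : sset V).

Lemma sset_ext M N : (forall x, M x <-> N x) -> M = N.
Proof.
by move=> MN; apply: functional_extensionality => x; apply: propositional_extensionality.
Qed.

Lemma ssum_szero M : ssum M (@szero R V) = M.
Proof.
apply: sset_ext => x; split=> [[y [z [My [-> ->]]]]|Mx]; first by rewrite addr0.
by exists x, 0; rewrite addr0.
Qed.

Lemma ssumC M N : ssum M N = ssum N M.
Proof.
by apply: sset_ext => x; split=> -[y [z [My [Nz ->]]]]; exists z, y; rewrite addrC.
Qed.

Lemma ssumA M N K : ssum M (ssum N K) = ssum (ssum M N) K.
Proof.
apply: sset_ext => x; split.
- move=> [y [_ [My [[z [w [Nz [Kw ->]]]] ->]]]].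
  by exists (y + z), w; rewrite addrA; split=> //; exists y, z.
- move=> [_ [w [[y [z [My [Nz ->]]]] [Kw ->]]]].
  by exists y, (z + w); rewrite addrA; split=> //; split=> //; exists z, w.
Qed.

Lemma pmul_pmul a b M : pmul p a (pmul p b M) = pmul p (b + a) M.
Proof.
apply: sset_ext => x; split.
- by move=> [_ [[y [My ->]] ->]]; exists y; rewrite scalerA -exprD addnC.
- move=> [y [My ->]]; exists (p ^+ b *: y); split; first by exists y.
  by rewrite scalerA -exprD addnC.
Qed.

Lemma pmul_ssum s M N : pmul p s (ssum M N) = ssum (pmul p s M) (pmul p s N).
Proof.
apply: sset_ext => x; split.
- move=> [_ [[y [z [My [Nz ->]]]] ->]].
  by exists (p ^+ s *: y), (p ^+ s *: z); rewrite scalerDr; split; [exists y|split; [exists z|]].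
- move=> [_ [_ [[y [My ->]] [[z [Nz ->]] ->]]]].
  by exists (y + z); rewrite scalerDr; split=> //; exists y, z.
Qed.

Lemma submod0 M : submod M -> M 0.
Proof. by case. Qed.

Lemma submodD M x y : submod M -> M x -> M y -> M (x + y).
Proof. by case=> _ [addM _]; apply: addM. Qed.

Lemma submodZ M a x : submod M -> M x -> M (a *: x).
Proof. by case=> _ [_ scaleM]; apply: scaleM. Qed.

Lemma submodB M x y : submod M -> M x -> M y -> M (x - y).
Proof. by move=> sM Mx My; apply: submodD => //; rewrite -scaleN1r; apply: submodZ. Qed.

Lemma submod_pmul s M : submod M -> submod (pmul p s M).
Proof.
move=> sM; split; first by exists 0; rewrite scaler0; split=> //; apply: submod0.
split=> [_ _ [y [My ->]] [z [Mz ->]]|a _ [y [My ->]]].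
- by exists (y + z); rewrite scalerDr; split=> //; apply: submodD.
- by exists (a *: y); rewrite !scalerA mulrC; split=> //; apply: submodZ.
Qed.

Lemma pmul_leq a b M : submod M -> (a <= b)%N -> ssub (pmul p b M) (pmul p a M).
Proof.
move=> sM ab _ [y [My ->]]; exists (p ^+ (b - a) *: y).
by rewrite scalerA -exprD subnKC //; split=> //; apply: submodZ.
Qed.

Lemma ssum_idPl M N : submod M -> submod N -> ssub N M -> ssum M N = M.
Proof.
move=> sM sN NM; apply: sset_ext => x; split=> [[y [z [My [Nz ->]]]]|Mx].
  by apply: submodD => //; apply: NM.
by exists x, 0; rewrite addr0; split=> //; split=> //; apply: submod0.
Qed.

Lemma scap_ssum_modular X Y Z :
  submod X -> ssub Z X -> scap X (ssum Y Z) = ssum (scap X Y) Z.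
Proof.
move=> sX ZX; apply: sset_ext => x; split.
- move=> [Xx [y [z [Yy [Zz Ex]]]]]; exists y, z; split=> //; split=> //.
  have -> : y = x - z by rewrite Ex addrK.
  by apply: submodB => //; apply: ZX.
- move=> [y [z [[Xy Yy] [Zz ->]]]].
  by split; [apply: submodD => //; apply: ZX | exists y, z].
Qed.

Lemma pmul_stable M m : ssub (pmul p m M) (pmul p m.+1 M) ->
  forall n, ssub (pmul p m M) (pmul p (m + n) M).
Proof.
move=> stab; elim=> [|n IHn]; first by rewrite addn0.
move=> x /IHn [y [My ->]].
have [z [Mz Ez]] : pmul p m.+1 M (p ^+ m *: y) by apply: stab; exists y.
exists z; split=> //.
by rewrite addnC exprD -scalerA Ez scalerA -exprD (addnC n) addnS.
Qed.

Lemma pmul_stable_szero M m l e : submod M -> (m < l)%N ->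
  ssub (pmul p m M) (pmul p l M) -> ssub (pmul p e M) (@szero R V) ->
  ssub (pmul p m M) (@szero R V).
Proof.
move=> sM ml mlM eM x mMx.
have stab : ssub (pmul p m M) (pmul p m.+1 M).
  by move=> y /mlM; apply: pmul_leq.
have [z [Mz ->]] := pmul_stable stab e mMx.
by rewrite exprD -scalerA (eM (p ^+ e *: z)) ?scaler0 //; exists z.
Qed.

End SubmoduleCalculus.

Section Subquotient.
Variables (R : idomainType) (p : R) (V : lmodType R) (A B : sset V).
Hypothesis sA : submod A.

Definition subquotient k l : sq V := SQ (pmul p l A) (pmul p (l - k) A) B.

Lemma sq_restr_down_embedding k l : (k <= l)%N ->
  sq_restr p k (sq_down p (l - k) (embedding A B)) = subquotient k l.
Proof. by move=> kl; rewrite /sq_restr /= !ssum_szero pmul_pmul subnK. Qed.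

Lemma sq_down_restr_embedding k l :
  sq_down p (l - k) (sq_restr p l (embedding A B)) = subquotient k l.
Proof.
rewrite /sq_down /= ssum_szero ssum_idPl //.
- exact: submod_pmul.
- exact: submod_pmul.
- exact: pmul_leq (leq_subr _ _).
Qed.

Lemma exponent_subquotient e k l : exponent_is p (embedding A B) e ->
  (k <= l <= e)%N -> exponent_is p (subquotient k l) k.
Proof.
move=> [/= eA eminimal] /andP[kl le]; split=> /= [|e' e'k].
  by rewrite pmul_pmul subnK.
rewrite pmul_pmul => mA_sub.
apply: (eminimal (l - k + e')%N); first by lia.
by apply: (pmul_stable_szero sA _ mA_sub eA); lia.
Qed.

Lemma kgamma_subquotient k l i m : (i <= k <= l)%N ->
  kgamma p (subquotient k l) i m = kgamma p (embedding A B) (l - k + i) m.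
Proof.
move=> /andP[ik kl]; rewrite /kgamma /= pmul_pmul ssum_szero ssum_idPl //.
- exact: submod_pmul.
- exact: submod_pmul.
- by apply: pmul_leq => //; lia.
Qed.

Lemma klein_denominator_modulo L l r : (L <= l)%N ->
  ssum (ssum (pmul p L A)
             (pmul p 1 (scap (pmul p (L - 2) A) (ssum (pmul p r B) (pmul p l A)))))
       (pmul p l A)
  = ssum (pmul p L A) (pmul p 1 (scap (pmul p (L - 2) A) (pmul p r B))).
Proof.
move=> Ll; have sAp s : submod (pmul p s A) by exact: submod_pmul.
set Q := pmul p 1 (scap _ (pmul p r B)).
rewrite scap_ssum_modular //; last by apply: pmul_leq => //; lia.
rewrite pmul_ssum pmul_pmul -/Q (ssumC Q) ssumA.
rewrite [ssum (pmul p L A) _]ssum_idPl //; last by apply: pmul_leq => //; lia.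
rewrite -ssumA (ssumC Q) ssumA [ssum (pmul p L A) _]ssum_idPl //.
exact: pmul_leq.
Qed.

Lemma kgamma_r_subquotient k l j r m : (2 <= j <= k)%N -> (k <= l)%N ->
  kgamma_r p (subquotient k l) j r m = kgamma_r p (embedding A B) (l - k + j) r m.
Proof.
move=> /andP[j2 jk] kl; rewrite /kgamma_r /= !ssum_szero !pmul_pmul.
rewrite [ssum (pmul p (l - k + (j - 2)) A) _]ssum_idPl; last 3 first.
- exact: submod_pmul.
- exact: submod_pmul.
- by apply: pmul_leq => //; lia.
by rewrite addnBA // klein_denominator_modulo //; lia.
Qed.

Lemma klein_tableau_subquotient T k l : is_klein_tableau p (embedding A B) T ->
  (k <= l <= kt_e T)%N -> is_klein_tableau p (subquotient k l) (kt_restrict T k l).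
Proof.
move=> [expT [gammaT phiT]] kle; have /andP[kl le] := kle.
split; first exact: exponent_subquotient expT kle.
split=> [i n /= ik n0 | j /= /andP[j2 jk] n n0] /=.
  by rewrite kgamma_subquotient ?ik ?kl // gammaT //; lia.
have [phi_pos [phi_mono phi_count]] := phiT (l - k + j)%N ltac:(lia) n n0.
rewrite (_ : (l - k + j.-1 = (l - k + j).-1)%N); last by lia.
split=> //; split=> // r r1.
by rewrite !kgamma_r_subquotient ?j2 //; exact: phi_count.
Qed.

End Subquotient.

Theorem lemma10 (R : idomainType) (p : R) (V : lmodType R) (A B : sset V)
    (T : KT) (k l : nat) :
  is_pid R -> is_maximal_ideal (dvdr p) ->
  p_module p B -> submod A -> ssub A B ->
  is_klein_tableau p (embedding A B) T ->
  (k <= l)%N -> (l <= kt_e T)%N ->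
  let E := embedding A B in
  let E1 := sq_restr p k (sq_down p (l - k) E) in
  let E2 := sq_down p (l - k) (sq_restr p l E) in
  sq_eq E1 (SQ (pmul p l A) (pmul p (l - k) A) B) /\
  sq_eq E2 (SQ (pmul p l A) (pmul p (l - k) A) B) /\
  is_klein_tableau p E1 (kt_restrict T k l) /\
  is_klein_tableau p E2 (kt_restrict T k l).
Proof.
move=> _ _ _ sA _ PiE kl le E E1 E2.
have -> : E1 = subquotient p A B k l by exact: sq_restr_down_embedding.
have -> : E2 = subquotient p A B k l by exact: sq_down_restr_embedding.
have kle : (k <= l <= kt_e T)%N by rewrite kl le.
have PiF := klein_tableau_subquotient sA PiE kle.
by do 3?split.
Qed.
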